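(* Let $p\in(0,1)$ and $0<\alpha<\frac{p}{1-p}$. Let $E:\mathbb{R}_{\ge0}\to\mathbb{R}_{\ge0}$ be a proper error score such that the limits $\lim_{x\to\infty}\frac{E'(x)}{E(x)}$, $\lim_{x\to\infty}\frac{E(x)}{E(ax)}$ and $\lim_{x\to\infty}\frac{E'(x)}{E'(ax)}$ exist (in the extended reals) for every $a\in(0,1)$, and suppose there are constants $k,\nu>0$ with $E(x)\le k e^{-\nu x}$ for all $x\ge0$. Then $E$ is undulating (with respect to $p,\alpha$).
   Context: A proper error score is a function $E:\mathbb{R}_{\ge0}\to\mathbb{R}_{\ge0}$ that is twice differentiable, with $E(x)>0$ and $E'(x)<0$ for all $x\ge0$, $E(0)=c_0>0$, and $\lim_{x\to\infty}E(x)=0$. Given $p\in(0,1)$ and $0<\alpha<\frac{p}{1-p}$, an error score $E$ is undulating if there exist $z_1,z_2\in\mathbb{R}$ such that $\frac{E'(pm)}{E'(\alpha(1-p)m)}>\frac{\alpha(1-p)}{p}$ for all $m\ge 0$ with $m<z_1$, and $\frac{E'(pm)}{E'(\alpha(1-p)m)}<\frac{\alpha(1-p)}{p}$ for all $m>z_2$. *)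

From Stdlib Require Import Reals.
From Coquelicot Require Import Coquelicot.
Open Scope R_scope.

Definition has_deriv_nonneg (f : R -> R) (x l : R) : Prop :=
  filterlim (fun y => (f y - f x) / (y - x))
    (within (fun y => 0 <= y /\ y <> x) (locally x)) (locally l).

Definition proper_error_score (E E' : R -> R) : Prop :=
  (forall x, 0 <= x -> has_deriv_nonneg E x (E' x)) /\
  (exists E'' : R -> R, forall x, 0 <= x -> has_deriv_nonneg E' x (E'' x)) /\
  (forall x, 0 <= x -> 0 < E x) /\
  (forall x, 0 <= x -> E' x < 0) /\
  0 < E 0 /\
  is_lim E p_infty 0.

Definition undulating (p alpha : R) (E' : R -> R) : Prop :=
  exists z1 z2 : R,
    (forall m, 0 <= m -> m < z1 ->
        E' (p * m) / E' (alpha * (1 - p) * m) > alpha * (1 - p) / p) /\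
    (forall m, 0 <= m -> z2 < m ->
        E' (p * m) / E' (alpha * (1 - p) * m) < alpha * (1 - p) / p).

(* Set c := alpha (1 - p) / p, so that 0 < c < 1 and the undulating ratio at m is
   E'(x) / E'(c x) with x = p m; the first clause holds vacuously with z1 = 0, and
   for the second it suffices that E'(x) / E'(c x) < c for large x.  Since this
   ratio has a limit, otherwise it would eventually exceed c/2.  Then
   y |-> E(c y)/2 - E(y) is eventually increasing with limit 0, hence eventually
   nonpositive: E(y/d) <= 2 E(y) for d = 1/c and large y.  Iterating gives
   E(X) <= 2^n E(X d^n), a decay of E at most polynomial along X d^n, which
   contradicts E(x) <= k exp(-nu x). *)

From Stdlib Require Import Reals Lra.
From Coquelicot Require Import Coquelicot.
Open Scope R_scope.

Lemma is_derive_of_has_deriv_nonneg (f : R -> R) (x l : R) :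
  0 < x -> has_deriv_nonneg f x l -> is_derive f x l.
Proof.
intros Hx Hf. apply is_derive_Reals. intros eps Heps.
destruct (Hf (ball l (mkposreal eps Heps)) (locally_ball _ _)) as [d Hd].
assert (Hmin : 0 < Rmin d x) by (apply Rmin_pos; [apply cond_pos | lra]).
exists (mkposreal _ Hmin). intros h Hh0 Hh. simpl in Hh.
pose proof (Rmin_l d x). pose proof (Rmin_r d x).
assert (Hball : ball x d (x + h)).
{ unfold ball; simpl; unfold AbsRing_ball, abs, minus, plus, opp; simpl.
  replace (x + h + - x) with h by ring. lra. }
assert (Hdom : 0 <= x + h /\ x + h <> x) by (apply Rabs_def2 in Hh; lra).
specialize (Hd _ Hball Hdom). revert Hd.
unfold ball; simpl; unfold AbsRing_ball, abs, minus, plus, opp; simpl.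
now replace (x + h - x) with h by ring.
Qed.

Lemma is_lim_eventually_lt_or_gt (f : R -> R) (L : Rbar) (a b : R) :
  a < b -> is_lim f p_infty L ->
  (exists M, forall x, M < x -> f x < b) \/ (exists M, forall x, M < x -> a < f x).
Proof.
intros Hab HL. apply is_lim_spec in HL.
destruct L as [l | |]; simpl in HL.
- destruct (Rlt_or_le l b) as [Hlb | Hbl].
  + left. assert (He : 0 < b - l) by lra.
    destruct (HL (mkposreal _ He)) as [M HM]. exists M. intros x Hx.
    specialize (HM x Hx). apply Rabs_def2 in HM. simpl in HM. lra.
  + right. assert (He : 0 < l - a) by lra.
    destruct (HL (mkposreal _ He)) as [M HM]. exists M. intros x Hx.
    specialize (HM x Hx). apply Rabs_def2 in HM. simpl in HM. lra.
- right. destruct (HL a) as [M HM]. now exists M.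
- left. destruct (HL b) as [M HM]. now exists M.
Qed.

Lemma nonpos_of_pos_derive_lim0 (g g' : R -> R) (X : R) :
  (forall y, X < y -> is_derive g y (g' y)) ->
  (forall y, X < y -> 0 < g' y) ->
  is_lim g p_infty 0 ->
  forall y, X < y -> g y <= 0.
Proof.
intros Hd Hpos Hlim y0 Hy0.
destruct (Rle_or_lt (g y0) 0) as [Hle | Hgt]; [exact Hle | exfalso].
apply is_lim_spec in Hlim. destruct (Hlim (mkposreal _ Hgt)) as [M HM]. simpl in HM.
set (y := Rmax y0 M + 1).
assert (Hy0y : y0 < y) by (unfold y; pose proof (Rmax_l y0 M); lra).
assert (HMy : M < y) by (unfold y; pose proof (Rmax_r y0 M); lra).
assert (Hincr : g y0 < g y).
{ apply (incr_function g (Finite X) p_infty g'); simpl; auto.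
  intros x Hx _. apply Rlt_gt, Hpos, Hx. }
specialize (HM y HMy). rewrite Rminus_0_r in HM. apply Rabs_def2 in HM. lra.
Qed.

Lemma iterate_doubling (f : R -> R) (d X : R) :
  1 <= d -> 0 <= X -> (forall y, X <= y -> f (y / d) <= 2 * f y) ->
  forall n, f X <= 2 ^ n * f (X * d ^ n).
Proof.
intros Hd HX Hdbl. induction n as [|n IH].
- simpl. rewrite Rmult_1_r. lra.
- pose proof (pow_R1_Rle d (S n) Hd).
  assert (Hstep := Hdbl (X * d ^ S n) ltac:(nra)).
  replace (X * d ^ S n / d) with (X * d ^ n) in Hstep by (simpl; field; lra).
  assert (0 < 2 ^ n) by (apply pow_lt; lra).
  replace (2 ^ S n) with (2 * 2 ^ n) by (simpl; ring). nra.
Qed.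

Lemma exp_le_exp_of_le (x y : R) : x <= y -> exp x <= exp y.
Proof.
intros Hxy. destruct (Rle_lt_or_eq_dec _ _ Hxy) as [Hlt | ->].
- left. now apply exp_increasing.
- right. reflexivity.
Qed.

Lemma exp_neg2_le_inv4 : exp (-2) <= / 4.
Proof.
replace (-2) with (- (1 + 1)) by ring. rewrite exp_Ropp, exp_plus.
apply Rinv_le_contravar; [lra |].
pose proof (exp_ineq1 1 ltac:(lra)). nra.
Qed.

Lemma exp_neg_geometric_le (a d : R) :
  1 <= d -> 2 <= a * (d - 1) ->
  forall n, exp (- (a * d ^ n)) <= (/ 4) ^ n * exp (- a).
Proof.
intros Hd Ha. pose proof exp_neg2_le_inv4. induction n as [|n IH].
- simpl. rewrite !Rmult_1_r, Rmult_1_l. lra.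
- pose proof (pow_R1_Rle d n Hd).
  replace (- (a * d ^ S n)) with (- (a * d ^ n) + - (a * (d - 1) * d ^ n))
    by (simpl; ring).
  rewrite exp_plus.
  assert (Hstep : exp (- (a * (d - 1) * d ^ n)) <= exp (-2))
    by (apply exp_le_exp_of_le; nra).
  pose proof (exp_pos (- (a * d ^ n))).
  simpl. nra.
Qed.

Lemma not_doubling_of_exp_decay (f : R -> R) (d X0 k nu : R) :
  1 < d -> 0 < k -> 0 < nu ->
  (forall x, 0 <= x -> 0 < f x) ->
  (forall x, 0 <= x -> f x <= k * exp (- nu * x)) ->
  ~ (forall y, X0 <= y -> f (y / d) <= 2 * f y).
Proof.
intros Hd Hk Hnu Hpos Hdecay Hdbl.
(* With nu X (d - 1) >= 2, each factor d costs the exponential bound at least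
   e^-2 <= 1/4, while doubling only gains a factor 2. *)
set (X := Rmax X0 0 + 2 / (nu * (d - 1))).
assert (Hfrac : 0 < 2 / (nu * (d - 1))) by (apply Rdiv_lt_0_compat; nra).
pose proof (Rmax_l X0 0). pose proof (Rmax_r X0 0).
assert (HX : 2 <= nu * X * (d - 1)).
{ assert (nu * (2 / (nu * (d - 1))) * (d - 1) = 2) by (field; lra).
  unfold X. nra. }
assert (Hiter := iterate_doubling f d X ltac:(lra) ltac:(unfold X; lra)
  ltac:(intros y Hy; apply Hdbl; unfold X in Hy; lra)).
assert (Hexp := exp_neg_geometric_le (nu * X) d ltac:(lra) HX).
assert (HfX : 0 < f X) by (apply Hpos; unfold X; lra).
assert (Hexp_le1 : exp (- (nu * X)) <= 1)
  by (rewrite <- exp_0; apply exp_le_exp_of_le; unfold X in *; nra).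
assert (Hbound : forall n, f X <= k * (/ 2) ^ n).
{ intros n. specialize (Hiter n). specialize (Hexp n).
  pose proof (pow_R1_Rle d n ltac:(lra)).
  assert (Hfn := Hdecay (X * d ^ n) ltac:(unfold X in *; nra)).
  replace (- nu * (X * d ^ n)) with (- (nu * X * d ^ n)) in Hfn by ring.
  assert (H2n : 2 ^ n * (/ 4) ^ n = (/ 2) ^ n)
    by (rewrite <- Rpow_mult_distr; f_equal; field).
  assert (0 < 2 ^ n) by (apply pow_lt; lra).
  assert (0 <= (/ 4) ^ n) by (apply pow_le; lra).
  rewrite <- H2n.
  apply (Rle_trans _ _ _ Hiter).
  apply Rle_trans with (2 ^ n * (k * ((/ 4) ^ n * exp (- (nu * X))))).
  - apply Rmult_le_compat_l; [lra |].
    apply (Rle_trans _ _ _ Hfn). apply Rmult_le_compat_l; lra.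
  - assert (0 <= k * 2 ^ n * (/ 4) ^ n) by (apply Rmult_le_pos; nra). nra. }
destruct (pow_lt_1_zero (/ 2) ltac:(rewrite Rabs_pos_eq; lra) (f X / k)
  ltac:(apply Rdiv_lt_0_compat; lra)) as [N HN].
specialize (HN N (le_n N)). rewrite Rabs_pos_eq in HN by (apply pow_le; lra).
specialize (Hbound N).
assert (f X / k * k = f X) by (field; lra). nra.
Qed.

Section DerivativeRatio.

Variables (E E' : R -> R) (c : R).
Hypotheses (Hc : 0 < c < 1) (HE : proper_error_score E E').

Lemma dilated_difference_derive (y : R) :
  0 < y -> is_derive (fun t => E (c * t) / 2 - E t) y (c / 2 * E' (c * y) - E' y).
Proof.
intros Hy. destruct HE as [HD _].
assert (Hcy : 0 < c * y) by nra.
assert (DEc : is_derive E (c * y) (E' (c * y)))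
  by (apply is_derive_of_has_deriv_nonneg; [| apply HD]; lra).
assert (DE : is_derive E y (E' y))
  by (apply is_derive_of_has_deriv_nonneg; [| apply HD]; lra).
assert (Dlin : is_derive (fun t => c * t) y c).
{ pose proof (is_derive_scal _ _ c _ (is_derive_id y)) as D.
  now rewrite Rmult_1_r in D. }
pose proof (is_derive_minus _ _ _ _ _
  (is_derive_scal _ _ (/ 2) _ (is_derive_comp E (fun t => c * t) y _ _ DEc Dlin)) DE)
  as D.
replace (c / 2 * E' (c * y) - E' y) with (minus (/ 2 * scal c (E' (c * y))) (E' y))
  by (unfold minus, plus, opp, scal; simpl; unfold mult; simpl; field).
eapply is_derive_ext; [| exact D].
intros t. simpl. unfold minus, plus, opp; simpl. field.
Qed.

Lemma dilated_difference_lim :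
  is_lim (fun t => E (c * t) / 2 - E t) p_infty 0.
Proof.
destruct HE as (_ & _ & _ & _ & _ & HElim).
assert (Hdil : is_lim (fun t => c * t) p_infty p_infty).
{ apply is_lim_spec. intros M. exists (M / c). intros t Ht.
  apply Rmult_lt_compat_l with (r := c) in Ht; [| lra].
  replace (c * (M / c)) with M in Ht by (field; lra). exact Ht. }
assert (HEc : is_lim (fun t => E (c * t)) p_infty 0).
{ apply (is_lim_comp E (fun t => c * t) p_infty 0 p_infty HElim Hdil).
  exists 0. intros t _. discriminate. }
apply (is_lim_minus _ _ _ 0 0 0); [| exact HElim | ].
- replace (Finite 0) with (Rbar_mult 0 (/ 2)) by (simpl; f_equal; ring).
  apply (is_lim_scal_r (fun t => E (c * t)) (/ 2)). exact HEc.
- unfold is_Rbar_minus, is_Rbar_plus. simpl. f_equal. f_equal. ring.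
Qed.

Lemma dilation_doubling (X : R) :
  (forall x, X < x -> c / 2 < E' x / E' (c * x)) ->
  forall y, Rmax X 0 < y -> E (c * y) <= 2 * E y.
Proof.
intros Hratio y Hy.
enough (E (c * y) / 2 - E y <= 0) by lra.
pose proof (Rmax_l X 0). pose proof (Rmax_r X 0).
apply (nonpos_of_pos_derive_lim0 (fun t => E (c * t) / 2 - E t) (fun t => c / 2 * E' (c * t) - E' t) (Rmax X 0));
  [| | exact dilated_difference_lim | exact Hy].
- intros t Ht. apply dilated_difference_derive. lra.
- intros t Ht. destruct HE as (_ & _ & _ & Hneg & _).
  assert (Hct : E' (c * t) < 0) by (apply Hneg; nra).
  specialize (Hratio t ltac:(lra)).
  assert (E' t = E' t / E' (c * t) * E' (c * t)) by (field; lra). nra.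
Qed.

Lemma derivative_ratio_eventually_lt (k nu : R) :
  0 < k -> 0 < nu ->
  (forall x, 0 <= x -> E x <= k * exp (- nu * x)) ->
  (exists l : Rbar, is_lim (fun x => E' x / E' (c * x)) p_infty l) ->
  exists M, forall x, M < x -> E' x / E' (c * x) < c.
Proof.
intros Hk Hnu Hdecay [l Hl].
destruct (is_lim_eventually_lt_or_gt _ _ (c / 2) c ltac:(lra) Hl) as [Hlt | [X Hgt]];
  [exact Hlt | exfalso].
destruct HE as (_ & _ & Hpos & _).
apply (not_doubling_of_exp_decay E (/ c) (Rmax X 0 + 1) k nu); auto.
- rewrite <- Rinv_1. apply Rinv_lt_contravar; lra.
- intros y Hy. unfold Rdiv. rewrite Rinv_inv, Rmult_comm.
  apply (dilation_doubling X Hgt). lra.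
Qed.

End DerivativeRatio.

Theorem corollary1 (p alpha : R) (E E' : R -> R)
  (hp : 0 < p < 1)
  (halpha : 0 < alpha < p / (1 - p))
  (hE : proper_error_score E E')
  (hlim1 : exists l : Rbar, is_lim (fun x => E' x / E x) p_infty l)
  (hlim2 : forall a, 0 < a < 1 ->
     exists l : Rbar, is_lim (fun x => E x / E (a * x)) p_infty l)
  (hlim3 : forall a, 0 < a < 1 ->
     exists l : Rbar, is_lim (fun x => E' x / E' (a * x)) p_infty l)
  (hexp : exists k nu : R, 0 < k /\ 0 < nu /\
     forall x, 0 <= x -> E x <= k * exp (- nu * x)) :
  undulating p alpha E'.
Proof.
destruct hexp as (k & nu & Hk & Hnu & Hdecay).
set (c := alpha * (1 - p) / p).
assert (Hc : 0 < c < 1).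
{ assert (alpha * (1 - p) < p).
  { assert (Hlt : alpha * (1 - p) < p / (1 - p) * (1 - p))
      by (apply Rmult_lt_compat_r; lra).
    replace (p / (1 - p) * (1 - p)) with p in Hlt by (field; lra). exact Hlt. }
  unfold c. split; [apply Rdiv_lt_0_compat; nra |].
  apply Rmult_lt_reg_r with p; [lra |]. field_simplify; lra. }
destruct (derivative_ratio_eventually_lt E E' c Hc hE k nu Hk Hnu Hdecay (hlim3 c Hc))
  as [M HM].
exists 0, (M / p). split; [intros m Hm0 Hm; lra |].
intros m _ Hm.
assert (HpM : M < p * m).
{ apply Rmult_lt_compat_l with (r := p) in Hm; [| lra].
  replace (p * (M / p)) with M in Hm by (field; lra). exact Hm. }
replace (alpha * (1 - p) * m) with (c * (p * m)) by (unfold c; field; lra).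
exact (HM _ HpM).
Qed.
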